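(* Let $D$ be an integral domain and let $\Theta$ be a Jaffard family of $D$. Then there is an exact sequence $$0\longrightarrow\mathrm{Pic}(D,\Theta)\longrightarrow\mathrm{Pic}(D)\longrightarrow\bigoplus_{T\in\Theta}\mathrm{Pic}(T)\longrightarrow 0,$$ where the first map is the inclusion and the second is $[I]\mapsto([IT])_{T\in\Theta}$.
   Context: $K$ is the quotient field of $D$; for a domain $A$, $\mathrm{Pic}(A)$ is the group of invertible fractional ideals modulo principal ones. $\mathrm{Pic}(D,\Theta)=\{[I]\in\mathrm{Pic}(D)\mid IT\text{ principal for all }T\in\Theta\}$. An overring is a ring between $D$ and $K$, flat if flat as a $D$-module. A pre-Jaffard family of $D$ is a set $\Theta$ of overrings with: $\Theta=\{K\}$ or $K\notin\Theta$; all members flat; complete (every ideal $I$ of $D$ equals $\bigcap_{T\in\Theta}IT$); independent ($TT'=K$ for distinct members); compact in the Zariski topology on overrings (subbasic opens $\{T\mid x_1,\dots,x_n\in T\}$). A Jaffard family is a pre-Jaffard family that is locally finite (each nonzero $x\in D$ is a nonunit in only finitely many members). *)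

From Stdlib Require List.
From HB Require Import structures.
From mathcomp Require Import all_boot all_order all_algebra.
Set Implicit Arguments. Unset Strict Implicit. Unset Printing Implicit Defensive.
Import Order.TTheory GRing.Theory.
Local Open Scope ring_scope.

Section Defs.
Variable K : fieldType.

Definition subring (A : K -> Prop) : Prop :=
  A 0 /\ A 1 /\ (forall x y, A x -> A y -> A (x - y)) /\
  (forall x y, A x -> A y -> A (x * y)).

Definition domain_with_quotient_field (D : K -> Prop) : Prop :=
  subring D /\ forall x : K, exists a b, D a /\ D b /\ b != 0 /\ x = a / b.

Definition prodset (A B : K -> Prop) : K -> Prop :=
  fun x => exists (n : nat) (a b : 'I_n -> K),
    (forall i, A (a i)) /\ (forall i, B (b i)) /\ x = \sum_(i < n) a i * b i.

Definition seteq (A B : K -> Prop) : Prop := forall x, A x <-> B x.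

Definition overring (D T : K -> Prop) : Prop :=
  subring T /\ (forall x, D x -> T x).

(* Flatness of the D-module T, via the equational criterion of flatness. *)
Definition flat_over (D T : K -> Prop) : Prop :=
  forall (n : nat) (a m : 'I_n -> K),
    (forall i, D (a i)) -> (forall i, T (m i)) ->
    \sum_(i < n) a i * m i = 0 ->
    exists (p : nat) (b : 'I_n -> 'I_p -> K) (m' : 'I_p -> K),
      (forall i j, D (b i j)) /\ (forall j, T (m' j)) /\
      (forall i, m i = \sum_(j < p) b i j * m' j) /\
      (forall j, \sum_(i < n) a i * b i j = 0).

Definition ideal (D I : K -> Prop) : Prop :=
  (forall x, I x -> D x) /\ I 0 /\ (forall x y, I x -> I y -> I (x + y)) /\
  (forall d x, D d -> I x -> I (d * x)).

Definition submodule (A I : K -> Prop) : Prop :=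
  I 0 /\ (forall x y, I x -> I y -> I (x + y)) /\
  (forall d x, A d -> I x -> I (d * x)).

Definition fractional (A I : K -> Prop) : Prop :=
  submodule A I /\ exists d, A d /\ d != 0 /\ forall x, I x -> A (d * x).

Definition invertible (A I : K -> Prop) : Prop :=
  fractional A I /\ exists J, fractional A J /\ seteq (prodset I J) A.

Definition principal (A I : K -> Prop) : Prop :=
  exists x : K, seteq I (fun y => exists a, A a /\ y = x * a).

Definition pic_equiv (I J : K -> Prop) : Prop :=
  exists x : K, x != 0 /\ seteq I (fun y => exists z, J z /\ y = x * z).

Definition zariski_open (D : K -> Prop) (O : (K -> Prop) -> Prop) : Prop :=
  forall T, overring D T -> O T ->
    exists F : seq K, (forall x, x \in F -> T x) /\
      forall T', overring D T' -> (forall x, x \in F -> T' x) -> O T'.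

Definition zariski_compact (D : K -> Prop) (Theta : (K -> Prop) -> Prop) : Prop :=
  forall U : ((K -> Prop) -> Prop) -> Prop,
    (forall O, U O -> zariski_open D O) ->
    (forall T, Theta T -> exists O, U O /\ O T) ->
    exists s : seq ((K -> Prop) -> Prop),
      (forall O, List.In O s -> U O) /\
      (forall T, Theta T -> exists O, List.In O s /\ O T).

Definition pre_jaffard (D : K -> Prop) (Theta : (K -> Prop) -> Prop) : Prop :=
  [/\
      (forall T, Theta T <-> seteq T (fun _ => True)) \/
        (forall T, Theta T -> ~ seteq T (fun _ => True)),
      (forall T, Theta T -> overring D T /\ flat_over D T),
      (forall I, ideal D I ->
         forall x, I x <-> (forall T, Theta T -> prodset I T x)),
      (forall T T', Theta T -> Theta T' -> ~ seteq T T' ->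
         seteq (prodset T T') (fun _ => True)) &
      zariski_compact D Theta].

Definition unit_in (T : K -> Prop) (x : K) : Prop :=
  exists y, T y /\ x * y = 1.

Definition jaffard (D : K -> Prop) (Theta : (K -> Prop) -> Prop) : Prop :=
  pre_jaffard D Theta /\
  forall x, D x -> x != 0 ->
    exists s : seq (K -> Prop),
      forall T, Theta T -> ~ unit_in T x -> List.In T s.

Definition in_pic_theta (D : K -> Prop) (Theta : (K -> Prop) -> Prop)
  (I : K -> Prop) : Prop :=
  invertible D I /\ forall T, Theta T -> principal T (prodset I T).

End Defs.

(* Apart from surjectivity, everything is bookkeeping with products of submodules
   of K.  For surjectivity, local finiteness of the support reduces to realising a
   single class [J] of Pic(T0) by an invertible ideal I of D with IT0 ~ J and IT = T
   for every other T in Theta.  Scale J into T0.  Flatness of T0 makes J generated by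
   finitely many elements of D /\ J; one of them, d, is a unit in almost every T in
   Theta, and for each of the finitely many remaining T <> T0, independence (T0 T = K)
   and flatness of T give finitely many further elements of D /\ J generating the
   unit ideal of T.  The ideal I of D generated by all of them is J at T0 and T
   elsewhere, and it is invertible because completeness of Theta, applied to
   I (D : I), shows that this ideal contains 1. *)

From Stdlib Require List.
From Stdlib Require Import FunctionalExtensionality PropExtensionality Classical.
From mathcomp Require Import all_boot all_order all_algebra.
From mathcomp Require Import ring.
Set Implicit Arguments. Unset Strict Implicit. Unset Printing Implicit Defensive.
Import GRing.Theory.
Local Open Scope ring_scope.

Section SetProducts.
Variable K : fieldType.
Implicit Types (A B C E : K -> Prop) (k x y : K).

Lemma seteq_ext A B : seteq A B -> A = B.
Proof.
by move=> AB; apply: functional_extensionality => x; apply: propositional_extensionality.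
Qed.

Definition seqset (s : seq K) : K -> Prop := fun z => z \in s.

Definition scaleset k A : K -> Prop := fun y => exists z, A z /\ y = k * z.

Lemma prodset0 A B : prodset A B 0.
Proof.
exists 0%N, (fun=> 0), (fun=> 0).
by split; [case | split; [case | rewrite big_ord0]].
Qed.

Lemma prodset_mul A B a b : A a -> B b -> prodset A B (a * b).
Proof. by move=> Aa Bb; exists 1%N, (fun=> a), (fun=> b); rewrite big_ord1. Qed.

Lemma prodsetD A B x y : prodset A B x -> prodset A B y -> prodset A B (x + y).
Proof.
move=> [m [a [b [Aa [Bb ->]]]]] [n [a' [b' [Aa' [Bb' ->]]]]].
pose glue (f : 'I_m -> K) (g : 'I_n -> K) i :=
  match split i with inl j => f j | inr j => g j end.
have glue_l f g i : glue f g (lshift n i) = f i.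
  by rewrite /glue (unsplitK (inl i : 'I_m + 'I_n)).
have glue_r f g i : glue f g (rshift m i) = g i.
  by rewrite /glue (unsplitK (inr i : 'I_m + 'I_n)).
exists (m + n)%N, (glue a a'), (glue b b'); split; [|split].
- by move=> i; rewrite /glue; case: split.
- by move=> i; rewrite /glue; case: split.
- by rewrite big_split_ord; congr (_ + _); apply: eq_bigr => i _; rewrite ?glue_l ?glue_r.
Qed.

Lemma prodset_ind A B (P : K -> Prop) : P 0 -> (forall x y, P x -> P y -> P (x + y)) ->
  (forall a b, A a -> B b -> P (a * b)) -> forall x, prodset A B x -> P x.
Proof.
move=> P0 PD Pab _ [n [a [b [Aa [Bb ->]]]]].
by apply: (big_ind P) => // i _; apply: Pab.
Qed.

Lemma prodsetS A A' B B' : (forall a, A a -> A' a) -> (forall b, B b -> B' b) ->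
  forall x, prodset A B x -> prodset A' B' x.
Proof.
move=> AA' BB' _ [n [a [b [Aa [Bb ->]]]]].
by exists n, a, b; split=> [i|]; [apply: AA' | split=> // i; apply: BB'].
Qed.

Lemma prodset_scale_subl A A' B k : (forall a, A a -> A' (k * a)) ->
  forall x, prodset A B x -> prodset A' B (k * x).
Proof.
move=> AA' _ [n [a [b [Aa [Bb ->]]]]].
exists n, (fun i => k * a i), b; split=> [i|]; first exact: AA'.
by split=> //; rewrite big_distrr; apply: eq_bigr => i _; apply: mulrA.
Qed.

Lemma prodsetC A B : prodset A B = prodset B A.
Proof.
have sub A' B' x : prodset A' B' x -> prodset B' A' x.
  move=> [n [a [b [Aa [Bb ->]]]]]; exists n, b, a; do 2!split=> //.
  by apply: eq_bigr => i _; rewrite mulrC.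
by apply: seteq_ext => x; split; apply: sub.
Qed.

Lemma prodset_scale_subr A B B' k : (forall b, B b -> B' (k * b)) ->
  forall x, prodset A B x -> prodset A B' (k * x).
Proof. by rewrite [prodset A B]prodsetC [prodset A B']prodsetC; apply: prodset_scale_subl. Qed.

Lemma prodset_eq0 A B : (forall a, A a -> a = 0) -> forall x, prodset A B x -> x = 0.
Proof.
move=> A0; apply: prodset_ind => [|x y -> ->|a b /A0 -> _]; by rewrite ?addr0 ?mul0r.
Qed.

Lemma prodsetA A B C : prodset (prodset A B) C = prodset A (prodset B C).
Proof.
have sub A' B' C' x : prodset (prodset A' B') C' x -> prodset A' (prodset B' C') x.
  apply: prodset_ind; [exact: prodset0 | exact: prodsetD |] => y c + Cc.
  rewrite mulrC; apply: prodset_scale_subr => b Bb.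
  by rewrite mulrC; apply: prodset_mul.
apply: seteq_ext => x; split; first exact: sub.
rewrite [prodset A _]prodsetC [prodset B C]prodsetC => /sub.
by rewrite [prodset (prodset A B) C]prodsetC [prodset A B]prodsetC.
Qed.

Lemma prodsetACA A B C E :
  prodset (prodset A B) (prodset C E) = prodset (prodset A C) (prodset B E).
Proof. by rewrite !prodsetA -(prodsetA B) (prodsetC B C) prodsetA. Qed.

Lemma prodset_scalel k A B : prodset (scaleset k A) B = scaleset k (prodset A B).
Proof.
apply: seteq_ext => x; split.
  apply: prodset_ind => [|_ _ [u [Au ->]] [v [Av ->]]|_ b [a [Aa ->]] Bb].
  - by exists 0; split; [exact: prodset0 | rewrite mulr0].
  - by exists (u + v); split; [exact: prodsetD | rewrite mulrDr].
  - by exists (a * b); split; [exact: prodset_mul | rewrite mulrA].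
by move=> [z [Az ->]]; apply: prodset_scale_subl Az => a Aa; exists a.
Qed.

Lemma scalesetA k1 k2 A : scaleset k1 (scaleset k2 A) = scaleset (k1 * k2) A.
Proof.
apply: seteq_ext => x; split=> [[_ [[z [Az ->]] ->]]|[z [Az ->]]].
  by exists z; rewrite mulrA.
by exists (k2 * z); split; [exists z | rewrite mulrA].
Qed.

Lemma scale1set A : scaleset 1 A = A.
Proof.
apply: seteq_ext => x; split=> [[z [Az ->]]|Ax]; first by rewrite mul1r.
by exists x; rewrite mul1r.
Qed.

Lemma prodset_seqset A B x : prodset A B x ->
  exists2 l, (forall z, z \in l -> A z) & prodset (seqset l) B x.
Proof.
move=> [n [a [b [Aa [Bb ->]]]]]; exists (codom a) => [_ /codomP [i ->] //|].
by exists n, a, b; split=> // i; apply: codom_f.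
Qed.

Lemma prodset_seqset_all A B (hs : seq K) : (forall h, h \in hs -> prodset A B h) ->
  exists2 l, (forall z, z \in l -> A z) & forall h, h \in hs -> prodset (seqset l) B h.
Proof.
elim: hs => [|h hs IH] hsAB; first by exists [::].
have [l1 l1A hl1] := prodset_seqset (hsAB h (mem_head _ _)).
have [|l2 l2A hsl2] := IH => [y ys|]; first by apply: hsAB; rewrite inE ys orbT.
exists (l1 ++ l2) => [z|y]; first by rewrite mem_cat => /orP [/l1A | /l2A].
rewrite inE => /orP [/eqP -> | /hsl2]; [move: hl1 | ];
  by apply: prodsetS => // z; rewrite /seqset mem_cat => ->; rewrite ?orbT.
Qed.

End SetProducts.

Section Subrings.
Variable K : fieldType.
Implicit Types (A B M R T : K -> Prop) (x y : K).

Lemma subring0 T : subring T -> T 0. Proof. by case. Qed.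
Lemma subring1 T : subring T -> T 1. Proof. by case=> _ []. Qed.
Lemma subringB T x y : subring T -> T x -> T y -> T (x - y).
Proof. by case=> _ [_ [+ _]]; apply. Qed.
Lemma subringM T x y : subring T -> T x -> T y -> T (x * y).
Proof. by case=> _ [_ [_ +]]; apply. Qed.
Lemma subringN T x : subring T -> T x -> T (- x).
Proof. by move=> sT Tx; rewrite -sub0r; apply: subringB (subring0 sT) Tx. Qed.
Lemma subringD T x y : subring T -> T x -> T y -> T (x + y).
Proof. by move=> sT Tx Ty; rewrite -[y]opprK; apply: subringB (subringN sT Ty). Qed.

Lemma prodset_subring T A B : subring T -> (forall a b, A a -> B b -> T (a * b)) ->
  forall x, prodset A B x -> T x.
Proof.
by move=> sT ABT; apply: prodset_ind => //; [exact: subring0 | move=> *; apply: subringD].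
Qed.

Lemma submodule_subring R T : subring T -> (forall x, R x -> T x) -> submodule R T.
Proof.
move=> sT RT; split; first exact: subring0.
by split=> [x y|d x /RT]; [exact: subringD | exact: subringM].
Qed.

Lemma submodule_prodset R A B : submodule R A -> submodule R (prodset A B).
Proof.
move=> [_ [_ AM]]; split; first exact: prodset0.
by split=> [x y|d x Rd]; [exact: prodsetD | apply: prodset_scale_subl => a; apply: AM].
Qed.

Lemma prodset_submodule R M : R 1 -> submodule R M -> prodset M R = M.
Proof.
move=> R1 [M0 [MD MM]]; apply: seteq_ext => x; split=> [|Mx].
  by apply: prodset_ind => // a r Ma Rr; rewrite mulrC; apply: MM.
by rewrite -[x]mulr1; apply: prodset_mul.
Qed.

Lemma prodset_overring R T : subring R -> subring T -> (forall x, R x -> T x) ->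
  prodset R T = T.
Proof.
move=> sR sT RT; rewrite prodsetC.
by apply: prodset_submodule; [exact: subring1 | exact: submodule_subring].
Qed.

Lemma prodset_id T : subring T -> prodset T T = T.
Proof. by move=> sT; apply: prodset_overring. Qed.

Lemma prodset_idr A T : subring T -> prodset (prodset A T) T = prodset A T.
Proof. by move=> sT; rewrite prodsetA prodset_id. Qed.

Lemma prodset_extM A B T : subring T ->
  prodset (prodset A B) T = prodset (prodset A T) (prodset B T).
Proof. by move=> sT; rewrite prodsetACA prodset_id. Qed.

Lemma prodset_unit A T : subring T -> (forall a, A a -> T a) -> prodset A T 1 ->
  prodset A T = T.
Proof.
move=> sT AT A1; apply: seteq_ext => x; split.
  by apply: prodset_subring => // a t /AT Ta Tt; apply: subringM.
by move=> Tx; rewrite -[x]mulr1; apply: prodset_scale_subr A1 => t; apply: subringM.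
Qed.

End Subrings.

Section FractionalIdeals.
Variable K : fieldType.
Implicit Types (I J M R T : K -> Prop) (k x : K).

Lemma submodule_scale R M k : submodule R M -> submodule R (scaleset k M).
Proof.
move=> [M0 [MD MM]]; split; first by exists 0; rewrite mulr0.
split=> [_ _ [u [Mu ->]] [v [Mv ->]]|d _ Rd [u [Mu ->]]].
  by exists (u + v); rewrite mulrDr; split=> //; apply: MD.
by exists (d * u); rewrite mulrCA; split=> //; apply: MM.
Qed.

Lemma invertible_ring T : subring T -> invertible T T.
Proof.
move=> sT; have fT : fractional T T.
  split; first exact: submodule_subring.
  exists 1; split; first exact: subring1.
  by split=> [|x Tx]; [exact: oner_neq0 | rewrite mul1r].
by split=> //; exists T; split=> //; rewrite prodset_id.
Qed.

Lemma invertible_scale T I k : subring T -> T k -> k != 0 -> invertible T I ->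
  invertible T (scaleset k I).
Proof.
move=> sT Tk k0 [[sI [d [Td [d0 dI]]]] [J [[sJ [e [Te [e0 eJ]]]] IJ]]].
split.
  split; first exact: submodule_scale.
  exists d; do 2!split=> //; move=> _ [z [Iz ->]].
  by rewrite mulrCA; apply: subringM => //; apply: dI.
exists (scaleset k^-1 J); split.
  split; first exact: submodule_scale.
  exists (e * k); split; first exact: subringM.
  split=> [|_ [z [Jz ->]]]; first exact: mulf_neq0.
  by rewrite -mulrA mulVKf //; apply: eJ.
rewrite prodset_scalel prodsetC prodset_scalel scalesetA mulfV // scale1set prodsetC.
exact: IJ.
Qed.

Lemma invertible_neq0 T I : subring T -> invertible T I -> exists2 a, I a & a != 0.
Proof.
move=> sT [_ [J [_ IJ]]]; apply: NNPP => noa.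
have I0 a : I a -> a = 0.
  by move=> Ia; case: (eqVneq a 0) => // a0; case: noa; exists a.
have /eqP := prodset_eq0 I0 (proj2 (IJ 1) (subring1 sT)).
by rewrite oner_eq0.
Qed.

Lemma fractional_ext R T I : subring T -> (forall x, R x -> T x) -> fractional R I ->
  fractional T (prodset I T).
Proof.
move=> sT RT [sI [d [Rd [d0 dI]]]]; split.
  by rewrite prodsetC; apply: submodule_prodset; apply: submodule_subring.
exists d; split; first exact: RT.
split=> // x /(prodset_scale_subl (A' := R) dI).
by apply: prodset_subring => // a b /RT Ta Tb; apply: subringM.
Qed.

Lemma invertible_ext R T I : subring R -> subring T -> (forall x, R x -> T x) ->
  invertible R I -> invertible T (prodset I T).
Proof.
move=> sR sT RT [fI [J [fJ IJ]]]; split; first exact: fractional_ext fI.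
exists (prodset J T); split; first exact: fractional_ext fJ.
by rewrite prodsetACA prodset_id // (seteq_ext IJ) prodset_overring.
Qed.

Lemma fractional_prodset R I J : subring R -> fractional R I -> fractional R J ->
  fractional R (prodset I J).
Proof.
move=> sR [sI [d [Rd [d0 dI]]]] [_ [e [Re [e0 eJ]]]].
split; first exact: submodule_prodset.
exists (d * e); split; first exact: subringM.
split=> [|x IJx]; first exact: mulf_neq0.
rewrite -mulrA; move: (prodset_scale_subr (B' := R) eJ IJx).
move/(prodset_scale_subl (A' := R) dI).
by apply: prodset_subring => // a b Ra Rb; apply: subringM.
Qed.

Lemma invertible_prodset R I J : subring R -> invertible R I -> invertible R J ->
  invertible R (prodset I J).
Proof.
move=> sR [fI [I' [fI' II']]] [fJ [J' [fJ' JJ']]].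
split; first exact: fractional_prodset.
exists (prodset I' J'); split; first exact: fractional_prodset.
by rewrite prodsetACA (seteq_ext II') (seteq_ext JJ') prodset_id.
Qed.

Lemma invertible_fingen T I : subring T -> invertible T I ->
  exists2 gs, (forall g, g \in gs -> I g) & forall y, I y -> prodset (seqset gs) T y.
Proof.
move=> sT [_ [J [_ /seteq_ext IJ]]].
have IJ1 : prodset I J 1 by rewrite IJ; apply: subring1.
have [gs gsI gsJ1] := prodset_seqset IJ1.
exists gs => // y Iy; rewrite -[y]mulr1.
by apply: prodset_scale_subr gsJ1 => b Jb; rewrite -IJ; apply: prodset_mul.
Qed.

Lemma pic_equivP I J : pic_equiv I J <-> exists2 x, x != 0 & I = scaleset x J.
Proof.
split=> [[x [x0 /seteq_ext ->]]|[x x0 ->]]; first by exists x.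
by exists x; split.
Qed.

Lemma pic_equiv_ext I J T : pic_equiv I J -> pic_equiv (prodset I T) (prodset J T).
Proof.
by move=> /pic_equivP [x x0 ->]; apply/pic_equivP; exists x; rewrite ?prodset_scalel.
Qed.

Lemma principal_pic_equiv T I : subring T -> invertible T I ->
  principal T I <-> pic_equiv I T.
Proof.
move=> sT invI; split=> [[x /seteq_ext Ix]|[x [_ Ix]]]; last by exists x.
have [a Ia a0] := invertible_neq0 sT invI.
apply/pic_equivP; exists x => //; apply/eqP => x0.
move: Ia; rewrite Ix => -[t [_ at0]].
by move: a0; rewrite at0 x0 mul0r eqxx.
Qed.

Definition colon D I : K -> Prop := fun y => forall z, I z -> D (y * z).

Lemma ideal_prodset_colon D I : subring D -> ideal D I -> ideal D (prodset I (colon D I)).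
Proof.
move=> sD [_ [_ [_ IM]]].
split; first by apply: prodset_subring => // a c Ia Cc; rewrite mulrC; apply: Cc.
split; first exact: prodset0.
split=> [x y|d x Dd]; first exact: prodsetD.
by apply: prodset_scale_subl => a; apply: IM.
Qed.

Lemma invertible_colon D I : subring D -> ideal D I -> (exists2 g, I g & g != 0) ->
  prodset I (colon D I) 1 -> invertible D I.
Proof.
move=> sD I_ideal [g Ig g0] IC1.
have [MD [_ [_ MM]]] := ideal_prodset_colon sD I_ideal.
have [ID I_mod] := I_ideal.
split.
  split; first exact: I_mod.
  exists 1; split; first exact: subring1.
  by split=> [|x Ix]; [exact: oner_neq0 | rewrite mul1r; apply: ID].
exists (colon D I); split.
  split.
    split; first by move=> z _; rewrite mul0r; apply: subring0.
    split=> [x y Cx Cy z Iz|d x Dd Cx z Iz].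
      by rewrite mulrDl; apply: subringD (Cx z Iz) (Cy z Iz).
    by rewrite -mulrA; apply: subringM => //; apply: Cx.
  by exists g; split; [exact: ID | split=> // y Cy; rewrite mulrC; apply: Cy].
by move=> x; split=> [/MD //|Dx]; rewrite -[x]mulr1; apply: MM.
Qed.

End FractionalIdeals.

Section FlatOverring.
Variables (K : fieldType) (D T : K -> Prop).
Hypotheses (HD : domain_with_quotient_field D) (T_over : overring D T)
  (T_flat : flat_over D T).

Definition denominators (xs : seq K) : K -> Prop :=
  fun c => D c /\ forall x, x \in xs -> D (c * x).

Lemma flat_denominator x : T x -> prodset (denominators [:: x]) T 1.
Proof.
move=> Tx; have [[sD quotD] [sT _]] := (HD, T_over).
have [a [b [Da [Db [b0 xE]]]]] := quotD x.
(* Flatness applied to the relation [b * x - a * 1 = 0] yields [1 = sum_j c1j mj]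
   with [b * c0j = a * c1j], i.e. [c1j * x = c0j] lies in D. *)
pose rel (i : 'I_2) := if val i == 0%N then b else - a.
pose elt (i : 'I_2) := if val i == 0%N then x else 1.
have [i|i|/=|p [c [m [Dc [Tm [eltE relc]]]]]] := T_flat (a := rel) (m := elt).
- by rewrite /rel; case: ifP => _; [| apply: subringN].
- by rewrite /elt; case: ifP => _; [| apply: subring1].
- by rewrite !big_ord_recl big_ord0 /rel /elt /= xE; field.
set i1 : 'I_2 := lift ord0 ord0.
exists p, (c i1), m; split=> [j|]; last by split=> //; rewrite -eltE.
split=> [|_ /[1!inE] /eqP ->]; first exact: Dc.
have /eqP := relc j; rewrite !big_ord_recl big_ord0 /rel /= addr0 mulNr subr_eq0.
move=> /eqP bc; have -> : c i1 j * x = c ord0 j; last exact: Dc.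
by apply: (mulfI b0); rewrite bc xE mulrCA [b * _]mulrC divfK // mulrC.
Qed.

Lemma flat_denominators xs : (forall x, x \in xs -> T x) -> prodset (denominators xs) T 1.
Proof.
have [[sD _] [sT _]] := (HD, T_over).
elim: xs => [|x xs IH] xsT.
  by rewrite -[1]mulr1; apply: prodset_mul; first split=> //; apply: subring1.
have := prodset_mul (flat_denominator (xsT x (mem_head _ _)))
  (IH (fun y ys => xsT y (mem_behead (s := x :: xs) ys))).
rewrite mulr1 -prodset_extM //; apply: prodsetS => //.
apply: prodset_ind => [|c c' [Dc cD] [Dc' c'D]|c c' [Dc cxD] [Dc' c'D]].
- by split=> [|y _]; rewrite ?mul0r; apply: subring0.
- split=> [|y ys]; first exact: subringD.
  by rewrite mulrDl; apply: subringD (cD y ys) (c'D y ys).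
- split=> [|y]; first exact: subringM.
  rewrite inE => /orP [/eqP ->|xs_y].
    by rewrite mulrAC; apply: subringM (cxD x (mem_head _ _)) Dc'.
  by rewrite -mulrA; apply: subringM Dc (c'D y xs_y).
Qed.

Lemma flat_colon gs x : (forall g, g \in gs -> T (x * g)) ->
  prodset (colon D (prodset (seqset gs) D)) T x.
Proof.
move=> xgsT; have [sD _] := HD.
have xgs_den : prodset (denominators [seq x * g | g <- gs]) T 1.
  by apply: flat_denominators => _ /mapP [g gs_g ->]; apply: xgsT.
rewrite -[x]mulr1; apply: prodset_scale_subl xgs_den => c [Dc cxgD].
apply: (prodset_ind (P := fun z => D (x * c * z))) => [|y z Dy Dz|g d gs_g Dd].
- by rewrite mulr0; apply: subring0.
- by rewrite mulrDr; apply: subringD.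
- have -> : x * c * (g * d) = c * (x * g) * d by ring.
  by apply: subringM sD (cxgD _ (map_f _ gs_g)) Dd.
Qed.

Lemma independent_unit_ideal T0 J d : overring D T0 -> (forall x, prodset T0 T x) ->
  submodule T0 J -> D d -> J d -> d != 0 -> prodset (fun z => D z /\ J z) T 1.
Proof.
move=> [sT0 DT0] T0T [_ [_ JM]] Dd Jd d0.
have [ts tsT dts] : exists2 ts, (forall t, t \in ts -> T t) & prodset (seqset ts) T0 d^-1.
  by apply: prodset_seqset; rewrite prodsetC.
apply: prodsetS (flat_denominators tsT) => // c [Dc ctsD]; split=> //.
have cdT0 : T0 (c * d^-1).
  by apply: prodset_subring (prodset_scale_subl ctsD dts) => // a b /DT0; apply: subringM.
by rewrite -(divfK d0 c); apply: JM.
Qed.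

Lemma flat_integral_generators J : invertible T J -> (forall y, J y -> T y) ->
  exists2 gs, (forall g, g \in gs -> D g /\ J g) &
    forall y, J y -> prodset (seqset gs) T y.
Proof.
move=> invJ JT; have [sT DT] := T_over; have [[[_ [_ JM]] _] _] := invJ.
have [hs hsJ Jhs] := invertible_fingen sT invJ.
have hs_gen h : h \in hs -> prodset (fun z => D z /\ J z) T h.
  move=> hs_h; rewrite -[h]mulr1.
  apply: prodset_scale_subl (flat_denominator (JT h (hsJ h hs_h))) => c [Dc chD].
  rewrite mulrC; split; first exact/chD/mem_head.
  by apply: JM; [apply: DT | apply: hsJ].
have [gs gsDJ hs_gs] := prodset_seqset_all hs_gen.
exists gs => // y /Jhs; rewrite -(prodset_idr (seqset gs) sT).
by apply: prodsetS => // h /hs_gs.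
Qed.

End FlatOverring.

Section JaffardFamily.
Variables (K : fieldType) (D : K -> Prop) (Theta : (K -> Prop) -> Prop).
Hypothesis HD : domain_with_quotient_field D.
Hypothesis Theta_flat : forall T, Theta T -> overring D T /\ flat_over D T.
Hypothesis Theta_complete : forall I, ideal D I ->
  forall x, I x <-> (forall T, Theta T -> prodset I T x).
Hypothesis Theta_independent : forall T T', Theta T -> Theta T' -> ~ seteq T T' ->
  seteq (prodset T T') (fun _ => True).
Hypothesis Theta_locally_finite : forall x, D x -> x != 0 ->
  exists s : seq (K -> Prop), forall T, Theta T -> ~ unit_in T x -> List.In T s.

Lemma Theta_subring T : Theta T -> subring T.
Proof. by case/Theta_flat => -[]. Qed.

Lemma Theta_overring T : Theta T -> forall x, D x -> T x.
Proof. by case/Theta_flat => -[]. Qed.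

Lemma Theta_prodset_full T T' : Theta T -> Theta T' -> T <> T' -> forall x, prodset T T' x.
Proof.
move=> ThT ThT' TT' x.
by apply/(Theta_independent ThT ThT' (fun E => TT' (seteq_ext E))).
Qed.

Lemma Theta_invertible_ext I T : invertible D I -> Theta T -> invertible T (prodset I T).
Proof.
move=> invI ThT; apply: invertible_ext invI; first exact: HD.1.
  exact: Theta_subring.
exact: Theta_overring.
Qed.

Lemma invertible_locally gs : (forall g, g \in gs -> D g) -> (exists2 g, g \in gs & g != 0) ->
  (forall T, Theta T -> invertible T (prodset (prodset (seqset gs) D) T)) ->
  invertible D (prodset (seqset gs) D).
Proof.
move=> gsD [g0 gs_g0 g00] invIT; have [sD _] := HD.
set I := prodset (seqset gs) D.
have ID x : I x -> D x by apply: prodset_subring => // g d /gsD; apply: subringM.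
have IM d x : D d -> I x -> I (d * x).
  by move=> Dd; apply: prodset_scale_subr => b; apply: subringM.
have Ig g : g \in gs -> I g.
  by move=> gs_g; rewrite -[g]mulr1; apply: prodset_mul; last exact: subring1.
have I_ideal : ideal D I.
  by split=> //; split; [exact: prodset0 | split=> [x y|]; [exact: prodsetD | exact: IM]].
apply: (invertible_colon sD I_ideal); first by exists g0; [exact: Ig|].
apply/(Theta_complete (ideal_prodset_colon sD I_ideal)) => T ThT.
have [[[sT DT] T_flat] [_ [J [_ /seteq_ext ITJ]]]] := (Theta_flat ThT, invIT T ThT).
(* The inverse of IT lies in (D : I) T by flatness, so 1 lies in (I (D : I)) T. *)
have JC y : J y -> prodset (colon D I) T y.
  move=> Jy; apply: flat_colon => // g gs_g; rewrite -ITJ mulrC.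
  by apply: prodset_mul Jy; rewrite -[g]mulr1; apply: prodset_mul (Ig g gs_g) (subring1 sT).
have : prodset (prodset I T) J 1 by rewrite ITJ; apply: subring1.
by move/(prodsetS (fun _ h => h) JC); rewrite -prodset_extM.
Qed.

Lemma independent_generators T0 J d : Theta T0 -> submodule T0 J -> D d -> J d -> d != 0 ->
  exists2 es, (forall e, e \in es -> D e /\ J e) &
    forall T, Theta T -> T <> T0 -> prodset (seqset (d :: es)) T 1.
Proof.
move=> ThT0 J_mod Dd Jd d0; have [s d_unit] := Theta_locally_finite Dd d0.
suff [es esDJ es1] : exists2 es, (forall e, e \in es -> D e /\ J e) &
    forall T, Theta T -> T <> T0 -> List.In T s -> prodset (seqset es) T 1.
  exists es => // T ThT TT0; case: (classic (unit_in T d)) => [[y [Ty dy]]|d_nunit].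
    by rewrite -dy; apply: prodset_mul; rewrite // /seqset mem_head.
  apply: prodsetS (es1 T ThT TT0 (d_unit T ThT d_nunit)) => // e es_e.
  by rewrite /seqset inE es_e orbT.
elim: s {d_unit} => [|T s [es esDJ es1]]; first by exists [::].
case: (classic (Theta T /\ T <> T0)) => [[ThT TT0]|old]; last first.
  exists es => // T' ThT' T'T0 [T'E|]; last exact: es1.
  by case: old; rewrite T'E.
have [[sT DT] T_flat] := Theta_flat ThT.
have [l lDJ l1] := prodset_seqset (independent_unit_ideal HD (conj sT DT) T_flat
  (Theta_flat ThT0).1 (Theta_prodset_full ThT0 ThT (nesym TT0)) J_mod Dd Jd d0).
exists (l ++ es) => [e|T' ThT' T'T0 [<-|T's]]; first by rewrite mem_cat => /orP [/lDJ|/esDJ].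
  by apply: prodsetS l1 => // e l_e; rewrite /seqset mem_cat l_e.
apply: prodsetS (es1 T' ThT' T'T0 T's) => // e es_e.
by rewrite /seqset mem_cat es_e orbT.
Qed.

Lemma integral_ideal_lift T0 J : Theta T0 -> invertible T0 J -> (forall y, J y -> T0 y) ->
  exists2 I, invertible D I &
    prodset I T0 = J /\ forall T, Theta T -> T <> T0 -> prodset I T = T.
Proof.
move=> ThT0 invJ JT0; have [[sT0 DT0] T0_flat] := Theta_flat ThT0.
have [[J_mod _] _] := invJ.
have [gs0 gs0DJ Jgs0] := flat_integral_generators HD (conj sT0 DT0) T0_flat invJ JT0.
have [d gs0_d d0] : exists2 d, d \in gs0 & d != 0.
  have [a Ja a0] := invertible_neq0 sT0 invJ.
  apply: NNPP => no_d; move/eqP: a0; apply; apply: prodset_eq0 (Jgs0 a Ja) => g gs0_g.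
  by case: (eqVneq g 0) => // g0; case: no_d; exists g.
have [Dd Jd] := gs0DJ d gs0_d.
have [es esDJ es1] := independent_generators ThT0 J_mod Dd Jd d0.
set gs := gs0 ++ es.
have gsDJ g : g \in gs -> D g /\ J g by rewrite mem_cat => /orP [/gs0DJ|/esDJ].
have gsT T : Theta T -> prodset (prodset (seqset gs) D) T = prodset (seqset gs) T.
  move=> ThT; rewrite prodsetA.
  by rewrite (prodset_overring HD.1 (Theta_subring ThT) (Theta_overring ThT)).
have IT0 : prodset (prodset (seqset gs) D) T0 = J.
  have [J0 [JD JM]] := J_mod.
  rewrite gsT //; apply: seteq_ext => y; split.
    by apply: prodset_ind => // g t /gsDJ [_ Jg] Tt; rewrite mulrC; apply: JM.
  by move/Jgs0; apply: prodsetS => // g gs0_g; rewrite /seqset mem_cat gs0_g.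
have IT T : Theta T -> T <> T0 -> prodset (prodset (seqset gs) D) T = T.
  move=> ThT TT0; rewrite gsT //; apply: prodset_unit; first exact: Theta_subring.
    by move=> g /gsDJ [Dg _]; apply: Theta_overring.
  apply: prodsetS (es1 T ThT TT0) => // g; rewrite /seqset inE mem_cat.
  by case/orP=> [/eqP ->|->]; rewrite ?gs0_d ?orbT.
exists (prodset (seqset gs) D) => //.
apply: invertible_locally => [g /gsDJ [] //||T ThT].
  by exists d; rewrite // mem_cat gs0_d.
case: (classic (T = T0)) => [->|TT0]; first by rewrite IT0.
by rewrite IT //; apply/invertible_ring/Theta_subring.
Qed.

Lemma pic_lift_seq J : (forall T, Theta T -> invertible T (J T)) ->
  forall s : seq (K -> Prop), exists2 I, invertible D I & forall T, Theta T ->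
    (List.In T s -> pic_equiv (prodset I T) (J T)) /\ (~ List.In T s -> prodset I T = T).
Proof.
move=> invJ; elim=> [|T0 s [I invI IT]].
  exists D; first exact/invertible_ring/HD.1.
  move=> T ThT; split=> // _.
  exact: prodset_overring HD.1 (Theta_subring ThT) (Theta_overring ThT).
case: (classic (Theta T0 /\ ~ List.In T0 s)) => [[ThT0 T0s]|old]; last first.
  exists I => // T ThT; have [ITs ITns] := IT T ThT; split=> [[T0T|Ts]|Tns].
  - by apply: ITs; apply: NNPP => Tns; apply: old; rewrite T0T.
  - exact: ITs.
  - by apply: ITns => Ts; apply: Tns; right.
have sT0 := Theta_subring ThT0.
have [[_ [d [T0d [d0 dJ]]]] _] := invJ T0 ThT0.
have dJT0 y : scaleset d (J T0) y -> T0 y by move=> [z [Jz ->]]; apply: dJ.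
have [I0 invI0 [I0T0 I0T]] :=
  integral_ideal_lift ThT0 (invertible_scale sT0 T0d d0 (invJ T0 ThT0)) dJT0.
exists (prodset I I0); first exact: invertible_prodset HD.1 invI invI0.
move=> T ThT; rewrite prodset_extM; last exact: Theta_subring.
case: (classic (T = T0)) => [->|TT0].
  rewrite (IT T0 ThT0).2 // I0T0 prodsetC prodset_submodule; last 2 first.
  - exact: subring1.
  - by apply: submodule_scale; have [[]] := invJ T0 ThT0.
  by split=> [_|[]]; [apply/pic_equivP; exists d | left].
rewrite (I0T T ThT TT0) prodset_idr; last exact: Theta_subring.
have [ITs ITns] := IT T ThT; split=> [[T0T|]|Tns]; [by case: TT0 | exact: ITs |].
by apply: ITns => Ts; apply: Tns; right.
Qed.

Lemma principal_ext_almost_all I : invertible D I ->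
  exists s : seq (K -> Prop), forall T, Theta T -> ~ principal T (prodset I T) -> List.In T s.
Proof.
move=> invI; have [[_ [d [Dd [d0 dI]]]] _] := invI.
have [a Ia a0] := invertible_neq0 HD.1 invI.
have [s da_unit] := Theta_locally_finite (dI a Ia) (mulf_neq0 d0 a0).
exists s => T ThT nprinc; apply: da_unit => // -[w [Tw daw]]; apply: nprinc.
have [sT DT] := (Theta_subring ThT, Theta_overring ThT).
have aw : a * w = d^-1 by apply: (mulfI d0); rewrite mulrA daw mulfV.
exists d^-1 => z; split=> [ITz|[t [Tt ->]]].
  exists (d * z); split; last by rewrite mulKf.
  by apply: prodset_subring (prodset_scale_subl dI ITz) => // x y /DT; apply: subringM.
by rewrite -aw -mulrA; apply: prodset_mul => //; apply: subringM.
Qed.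

Lemma in_pic_thetaE I : invertible D I ->
  in_pic_theta D Theta I <-> forall T, Theta T -> pic_equiv (prodset I T) T.
Proof.
move=> invI; have Pic_ext T : Theta T -> principal T (prodset I T) <-> pic_equiv (prodset I T) T.
  by move=> ThT; apply: principal_pic_equiv (Theta_subring ThT) (Theta_invertible_ext invI ThT).
split=> [[_ princ] T ThT|equiv]; first exact/(Pic_ext T ThT)/princ.
by split=> // T ThT; apply/(Pic_ext T ThT)/equiv.
Qed.

Lemma pic_ext_surjective J : (forall T, Theta T -> invertible T (J T)) ->
  (exists s : seq (K -> Prop), forall T, Theta T -> ~ principal T (J T) -> List.In T s) ->
  exists I, invertible D I /\ forall T, Theta T -> pic_equiv (prodset I T) (J T).
Proof.
move=> invJ [s J_princ]; have [I invI IT] := pic_lift_seq invJ s.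
exists I; split=> // T ThT; have [ITs ITns] := IT T ThT.
case: (classic (List.In T s)) => [/ITs //|Tns].
have : principal T (J T) by apply: NNPP => /(J_princ T ThT).
move=> /(principal_pic_equiv (Theta_subring ThT) (invJ T ThT)) /pic_equivP [x x0 JT].
apply/pic_equivP; exists x^-1; first by rewrite invr_neq0.
by rewrite (ITns Tns) JT scalesetA mulVf // scale1set.
Qed.

End JaffardFamily.

Theorem proposition4p5 (K : fieldType) (D : K -> Prop)
  (Theta : (K -> Prop) -> Prop) :
  domain_with_quotient_field D -> jaffard D Theta ->
  [/\
   (* the map [I] |-> ([IT])_T is well defined into the direct sum *)
   (forall I, invertible D I ->
      (forall T, Theta T -> invertible T (prodset I T)) /\
      exists s : seq (K -> Prop),
        forall T, Theta T -> ~ principal T (prodset I T) -> List.In T s),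
   (* it respects classes *)
   (forall I I', invertible D I -> invertible D I' -> pic_equiv I I' ->
      forall T, Theta T -> pic_equiv (prodset I T) (prodset I' T)),
   (* it is a group homomorphism *)
   (forall I J, invertible D I -> invertible D J -> forall T, Theta T ->
      seteq (prodset (prodset I J) T)
            (prodset (prodset I T) (prodset J T))),
   (* exactness at Pic(D): the kernel is exactly Pic(D, Theta) *)
   (forall I, invertible D I ->
      (in_pic_theta D Theta I <->
       forall T, Theta T -> pic_equiv (prodset I T) T)) &
   (* exactness at the direct sum: surjectivity *)
   (forall J : (K -> Prop) -> (K -> Prop),
      (forall T, Theta T -> invertible T (J T)) ->
      (exists s : seq (K -> Prop),
         forall T, Theta T -> ~ principal T (J T) -> List.In T s) ->
      exists I, invertible D I /\
        forall T, Theta T -> pic_equiv (prodset I T) (J T))].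
Proof.
move=> HD [[_ flat complete independent _] finite].
split=> [I invI|I I' _ _ /pic_equiv_ext + T _|I J _ _ T ThT|I|J].
- split=> [T|]; first exact: (Theta_invertible_ext HD flat invI).
  exact: (principal_ext_almost_all HD flat finite invI).
- by apply.
- by rewrite (prodset_extM I J (Theta_subring flat ThT)).
- exact: (in_pic_thetaE HD flat).
- exact: (pic_ext_surjective HD flat complete independent finite).
Qed.
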